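(* For every $\mu\in\Delta(\Omega)$ and $c\ge0$, in the optimization problem $$V(\mu,c)=\sup\Big\{\sum_m\lambda_mu^*_S(\nu_m):\sum_m\lambda_m\nu_m=\mu,\ \sum_m\lambda_mH(\nu_m)\ge H(\mu)-c\Big\}$$ the number of posteriors can be chosen to be at most $\min\{|A|,|\Omega|+1\}$; that is, the supremum is unchanged when restricted to splittings $(\lambda_m,\nu_m)_m$ with at most $\min\{|A|,|\Omega|+1\}$ elements.
   Context: For a finite set $S$, $\Delta(S)$ is the set of probability distributions on $S$. $\Omega$ is a finite set of states, $A$ a finite set of actions, $u_S,u_R:\Omega\times A\to\mathbb{R}$ payoff functions of sender and receiver. For $\nu\in\Delta(\Omega)$, $A^*(\nu)=\arg\max_{a\in A}\sum_\omega\nu(\omega)u_R(\omega,a)$ and $u^*_S(\nu)=\min_{a\in A^*(\nu)}\sum_\omega\nu(\omega)u_S(\omega,a)$. $H(q)=-\sum_sq(s)\log_2q(s)$ ($0\log0=0$). The supremum is over finite families $(\lambda_m,\nu_m)_m$ with $\nu_m\in\Delta(\Omega)$, $\lambda_m\ge0$, $\sum_m\lambda_m=1$. *)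

From HB Require Import structures.
From mathcomp Require Import all_boot all_order all_algebra.
From mathcomp Require Import all_classical all_reals.
From mathcomp Require Import exp.
Set Implicit Arguments. Unset Strict Implicit. Unset Printing Implicit Defensive.
Import Order.TTheory GRing.Theory Num.Theory.
Local Open Scope ring_scope.
Local Open Scope classical_set_scope.

Section Defs.
Variables (R : realType) (Omega A : finType).

Definition is_dist (nu : {ffun Omega -> R}) : Prop :=
  (forall w, 0 <= nu w) /\ \sum_(w : Omega) nu w = 1.

Definition expected (u : Omega -> A -> R) (nu : {ffun Omega -> R}) (a : A) : R :=
  \sum_(w : Omega) nu w * u w a.

Definition Astar (uR : Omega -> A -> R) (nu : {ffun Omega -> R}) : set A :=
  [set a | forall b : A, expected uR nu b <= expected uR nu a].

Definition uS_star (uS uR : Omega -> A -> R) (nu : {ffun Omega -> R}) : R :=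
  inf [set expected uS nu a | a in Astar uR nu].

Definition entropy (q : {ffun Omega -> R}) : R :=
  - \sum_(s : Omega) (if q s == 0 then 0 else q s * (ln (q s) / ln 2)).

Definition feasible (mu : {ffun Omega -> R}) (c : R) (n : nat)
  (lam : 'I_n -> R) (nu : 'I_n -> {ffun Omega -> R}) : Prop :=
  [/\ forall i, 0 <= lam i,
      \sum_(i < n) lam i = 1,
      forall i, is_dist (nu i),
      forall w, \sum_(i < n) lam i * nu i w = mu w
    & entropy mu - c <= \sum_(i < n) lam i * entropy (nu i)].

Definition values (uS uR : Omega -> A -> R) (mu : {ffun Omega -> R}) (c : R)
  (P : nat -> Prop) : set R :=
  [set v | exists n (lam : 'I_n -> R) (nu : 'I_n -> {ffun Omega -> R}),
     [/\ P n, feasible mu c lam nu &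
         v = \sum_(i < n) lam i * uS_star uS uR (nu i)]].

Definition V (uS uR : Omega -> A -> R) (mu : {ffun Omega -> R}) (c : R) : R :=
  sup (values uS uR mu c (fun _ => True)).

End Defs.

(* Two reductions, each of which keeps the splitting feasible and does not
   lower the sender's payoff.  First, pool the posteriors sharing a receiver
   best response [a] into their weighted average: [a] remains a best response
   there and every best response at the average is one at each pooled
   posterior (of positive weight), so the sender-worst payoff does not drop,
   and neither does the mean entropy since entropy is concave; at most |A|
   posteriors remain.  Second, view each posterior [nu] as the point
   (nu, H nu) of R^(Omega+1), on the hyperplane of total mass 1.  More than
   |Omega|+1 such points are linearly dependent, and shifting the weights
   along a dependency, in the direction that does not lower the payoff, until
   one weight vanishes preserves the mean posterior, the mean entropy and the
   total weight. *)

From HB Require Import structures.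
From mathcomp Require Import all_boot all_order all_algebra.
From mathcomp Require Import all_classical all_reals.
From mathcomp Require Import exp zify ring lra.
Set Implicit Arguments. Unset Strict Implicit. Unset Printing Implicit Defensive.
Import Order.TTheory GRing.Theory Num.Theory.
Local Open Scope ring_scope.
Local Open Scope classical_set_scope.

Lemma sum_option (V : nmodType) (T : finType) (F : option T -> V) :
  \sum_o F o = F None + \sum_t F (Some t).
Proof.
rewrite (bigD1 None) //=; congr (_ + _).
rewrite (reindex_omap Some id) //=; last by case.
by apply: eq_bigl => t; rewrite eqxx.
Qed.

Lemma sup_eq_dominated (R : realType) (S T : set R) :
  S `<=` T -> T `<=` down S -> sup S = sup T.
Proof.
move=> ST TS; rewrite -sup_down -[RHS]sup_down; congr sup.
apply/seteqP; split=> x /downP[y].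
  by move=> /ST Ty xy; apply/downP; exists y.
by move=> /TS /downP[z Sz yz] xy; apply/downP; exists z => //; apply: le_trans yz.
Qed.

Lemma exists_linear_relation (F : fieldType) (J : finType) n (x : 'I_n -> J -> F) :
  (#|J| < n)%N ->
  exists2 d : 'I_n -> F, exists i, d i != 0 & forall j, \sum_i d i * x i j = 0.
Proof.
move=> ltJn; pose M : 'M[F]_(n, #|J|) := \matrix_(i, k) x i (enum_val k).
have /negP M_dep : ~~ row_free M.
  by rewrite -row_leq_rank -ltnNge (leq_ltn_trans (rank_leq_col M)).
have [v vM0 v_neq0] : exists2 v : 'rV[F]_n, v *m M = 0 & v != 0.
  apply: contrapT => no_v; apply: M_dep; apply: inj_row_free => v vM0.
  by apply: contrapT => /eqP v_neq0; apply: no_v; exists v.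
exists (fun i => v 0 i); first exact/rV0Pn.
move=> j; transitivity ((v *m M) 0 (enum_rank j)); last by rewrite vM0 mxE.
by rewrite mxE; apply: eq_bigr => i _; rewrite mxE enum_rankK.
Qed.

Lemma sum_on_hyperplane (F : comPzRingType) (J : finType) (cw : J -> F) n
    (x : 'I_n -> J -> F) (l : 'I_n -> F) :
  (forall i, \sum_j cw j * x i j = 1) ->
  \sum_i l i = \sum_j cw j * \sum_i l i * x i j.
Proof.
move=> on_hyp; under [RHS]eq_bigr do rewrite big_distrr /=.
rewrite exchange_big /=; apply: eq_bigr => i _.
by rewrite -[LHS]mulr1 -(on_hyp i) big_distrr /=; apply: eq_bigr => j _; ring.
Qed.

Lemma ratio_test (F : realFieldType) n (lam d : 'I_n -> F) (i0 : 'I_n) :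
  (forall i, 0 <= lam i) -> d i0 < 0 ->
  exists t j, [/\ 0 <= t, forall i, 0 <= lam i + t * d i & lam j + t * d j = 0].
Proof.
move=> lam_ge0 di0_lt0.
pose j := [arg min_(i < i0 | d i < 0) (lam i / - d i)]%O.
have [dj_lt0 j_min] : d j < 0 /\ forall i, d i < 0 -> lam j / - d j <= lam i / - d i.
  by rewrite /j; case: arg_minP => //= k dk k_min; split => // i /k_min.
exists (lam j / - d j), j; split.
- by rewrite divr_ge0 // oppr_ge0 ltW.
- move=> i; have [di_lt0 | di_ge0] := ltP (d i) 0; last first.
    by rewrite addr_ge0 // mulr_ge0 // divr_ge0 // oppr_ge0 ltW.
  by have := j_min i di_lt0; rewrite ler_pdivlMr ?oppr_gt0 //; nra.
- by field; rewrite lt_eqF.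
Qed.

Section Caratheodory.
Variables (F : realFieldType) (J : finType) (cw : J -> F).

Lemma caratheodory_step n (x : 'I_n -> J -> F) (u lam : 'I_n -> F) :
  (forall i, \sum_j cw j * x i j = 1) -> (forall i, 0 <= lam i) -> (#|J| < n)%N ->
  exists lam1 j, [/\ forall i, 0 <= lam1 i, lam1 j = 0,
    forall k, \sum_i lam1 i * x i k = \sum_i lam i * x i k &
    \sum_i lam i * u i <= \sum_i lam1 i * u i].
Proof.
move=> on_hyp lam_ge0 ltJn.
have [d [[i1 di1_neq0] dx du_ge0]] : exists d : 'I_n -> F, [/\ exists i, d i != 0,
    forall k, \sum_i d i * x i k = 0 & 0 <= \sum_i d i * u i].
  have [d0 d0_neq0 d0x] := exists_linear_relation x ltJn.
  have [du_ge0 | du_lt0] := leP 0 (\sum_i d0 i * u i); first by exists d0.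
  exists (fun i => - d0 i); split.
  - by have [i1 d0i1] := d0_neq0; exists i1; rewrite oppr_eq0.
  - by move=> k; under eq_bigr do rewrite mulNr; rewrite sumrN d0x oppr0.
  - by under eq_bigr do rewrite mulNr; rewrite sumrN oppr_ge0 ltW.
have [i0 di0_lt0] : exists i0, d i0 < 0.
  apply: contrapT => no_neg.
  have d_ge0 i : 0 <= d i by rewrite leNgt; apply/negP => ?; apply: no_neg; exists i.
  have d_sum0 : \sum_i d i = 0.
    by rewrite (sum_on_hyperplane _ on_hyp) big1 // => j _; rewrite dx mulr0.
  by move/eqP: (psumr_eq0P (fun i _ => d_ge0 i) d_sum0 (i := i1) isT); apply/negP.
have [t [j [t_ge0 lam1_ge0 lam1j]]] := ratio_test lam_ge0 di0_lt0.
have shift y :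
    \sum_i (lam i + t * d i) * y i = \sum_i lam i * y i + t * \sum_i d i * y i.
  by rewrite big_distrr -big_split /=; apply: eq_bigr => i _; ring.
exists (fun i => lam i + t * d i), j.
by split => // [k|]; rewrite shift ?dx ?mulr0 ?addr0 // lerDl mulr_ge0.
Qed.

Lemma caratheodory n (x : 'I_n -> J -> F) (u lam : 'I_n -> F) :
  (forall i, \sum_j cw j * x i j = 1) -> (forall i, 0 <= lam i) ->
  exists m (g : 'I_m -> 'I_n) (lam' : 'I_m -> F),
    [/\ (m <= minn n #|J|)%N, forall k, 0 <= lam' k,
        forall j, \sum_k lam' k * x (g k) j = \sum_i lam i * x i j &
        \sum_i lam i * u i <= \sum_k lam' k * u (g k)].
Proof.
elim: n x u lam => [|n IHn] x u lam on_hyp lam_ge0.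
  by exists 0%N, id, lam; split => //; rewrite min0n.
have [le_nJ | ltJn] := leqP n.+1 #|J|.
  by exists n.+1, id, lam; split => //; rewrite (minn_idPl le_nJ).
have [lam1 [j [lam1_ge0 lam1j lam1x lam1u]]] := caratheodory_step u on_hyp lam_ge0 ltJn.
have drop_j y : \sum_i lam1 i * y i = \sum_(i < n) lam1 (lift j i) * y (lift j i).
  by rewrite (bigD1_ord j) //= lam1j mul0r add0r.
have [m [g [lam' [le_m lam'_ge0 lam'x lam'u]]]] :=
  IHn (fun i => x (lift j i)) (fun i => u (lift j i)) (fun i => lam1 (lift j i))
    (fun i => on_hyp _) (fun i => lam1_ge0 _).
exists m, (lift j \o g), lam'; split => //.
- by move: le_m ltJn; lia.
- by move=> k; rewrite lam'x -(drop_j (x^~ k)) lam1x.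
- by rewrite (le_trans lam1u) // drop_j.
Qed.

End Caratheodory.

Lemma xlnx_tangent (R : realType) (y m : R) : 0 <= y -> 0 < m ->
  y * ln m + y - m <= y * ln y.
Proof.
move=> y_ge0 m_gt0; have [y_gt0 | y_le0] := ltP 0 y; last first.
  have -> : y = 0 by apply/le_anti; rewrite y_le0 y_ge0.
  by rewrite !mul0r addr0 add0r oppr_le0 ltW.
have ln_ratio : ln m - ln y <= m / y - 1.
  rewrite -ln_div ?posrE // -[X in ln X](subrKC 1 (m / y)); apply: le_ln1Dx.
  by have := divr_gt0 m_gt0 y_gt0; lra.
have := ler_wpM2l (ltW y_gt0) ln_ratio.
by rewrite !mulrBr mulr1 mulrCA divff ?gt_eqF // mulr1; lra.
Qed.

Lemma jensen_xlnx (R : realType) (I : finType) (P : pred I) (l y : I -> R) (m : R) :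
  (forall i, 0 <= l i) -> (forall i, 0 <= y i) -> 0 < \sum_(i | P i) l i ->
  (\sum_(i | P i) l i) * m = \sum_(i | P i) l i * y i ->
  (\sum_(i | P i) l i) * (m * ln m) <= \sum_(i | P i) l i * (y i * ln (y i)).
Proof.
set L := \sum_(i | P i) l i => l_ge0 y_ge0 L_gt0 Lm.
have ly_ge0 i : 0 <= l i * y i by rewrite mulr_ge0.
have m_ge0 : 0 <= m by rewrite -(pmulr_rge0 _ L_gt0) Lm sumr_ge0.
have [m_gt0 | m_le0] := ltP 0 m; last first.
  have m0 : m = 0 by apply/le_anti; rewrite m_le0 m_ge0.
  rewrite m0 mulr0 in Lm; rewrite m0 !mul0r mulr0 big1 // => i Pi.
  by rewrite mulrA (psumr_eq0P (fun i _ => ly_ge0 i) (esym Lm)) ?mul0r.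
have tangent i : l i * (y i * ln m + y i - m) <= l i * (y i * ln (y i)).
  by apply: ler_wpM2l => //; apply: xlnx_tangent.
apply: le_trans (ler_sum _ (fun i _ => tangent i)).
rewrite (eq_bigr (fun i => l i * y i * ln m + l i * y i - l i * m)); last first.
  by move=> i _; ring.
by rewrite !big_split /= sumrN -!big_distrl /= -/L -Lm mulrA addrK.
Qed.

Lemma entropyE (R : realType) (Omega : finType) (q : {ffun Omega -> R}) :
  entropy q = - ((\sum_s q s * ln (q s)) / ln 2).
Proof.
rewrite /entropy big_distrl /=; congr (- _); apply: eq_bigr => s _.
by case: eqP => [->|_]; rewrite ?mul0r ?mulrA.
Qed.

Section BestResponses.
Variables (R : realType) (Omega A : finType) (uS uR : Omega -> A -> R).

Lemma Astar_arg_max (a0 : A) nu : Astar uR nu [arg max_(a > a0) expected uR nu a]%O.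
Proof. by case: arg_maxP => //= a _ a_max b; apply: a_max. Qed.

Lemma uS_star_le_expected nu a : Astar uR nu a -> uS_star uS uR nu <= expected uS nu a.
Proof.
move=> a_best; apply: ge_inf; last by exists a.
exists (expected uS nu [arg min_(b < a) expected uS nu b]%O) => _ [b _ <-].
by case: arg_minP => //= b' _; apply.
Qed.

Lemma le_uS_star nu y : (exists a, Astar uR nu a) ->
  (forall a, Astar uR nu a -> y <= expected uS nu a) -> y <= uS_star uS uR nu.
Proof.
move=> [a a_best] y_le; apply: lb_le_inf; first by exists (expected uS nu a), a.
by move=> _ [b b_best <-]; apply: y_le.
Qed.

End BestResponses.

Section Pool.
Variables (R : realType) (Omega : finType) (n : nat).
Variables (lam : 'I_n -> R) (nu : 'I_n -> {ffun Omega -> R}) (nu0 : {ffun Omega -> R}).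
Variable P : pred 'I_n.

Local Notation L := (\sum_(i | P i) lam i).

(* [nu0] is a placeholder for groups of zero total weight. *)
Definition pool : {ffun Omega -> R} :=
  if 0 < L then [ffun w => (\sum_(i | P i) lam i * nu i w) / L] else nu0.

Hypotheses (lam_ge0 : forall i, 0 <= lam i) (nu_dist : forall i, is_dist (nu i)).

Lemma pool_weight_eq0 : ~~ (0 < L) -> forall i, P i -> lam i = 0.
Proof.
rewrite -leNgt => L_le0; apply: psumr_eq0P => [i _|]; first exact: lam_ge0.
by apply/le_anti; rewrite L_le0 sumr_ge0.
Qed.

Lemma pool_mean w : L * pool w = \sum_(i | P i) lam i * nu i w.
Proof.
rewrite /pool; case: ifPn => [L_gt0 | /pool_weight_eq0 lam0].
  by rewrite ffunE mulrCA divff ?gt_eqF // mulr1.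
by rewrite !big1 ?mul0r // => i /lam0 ->; rewrite mul0r.
Qed.

Lemma expected_pool (A : finType) (u : Omega -> A -> R) a :
  L * expected u pool a = \sum_(i | P i) lam i * expected u (nu i) a.
Proof.
rewrite /expected big_distrr /=.
under eq_bigr do rewrite mulrA pool_mean big_distrl /=.
rewrite exchange_big /=; apply: eq_bigr => i _.
by rewrite big_distrr /=; apply: eq_bigr => w _; rewrite mulrA.
Qed.

Lemma pool_dist : is_dist nu0 -> is_dist pool.
Proof.
have [L_gt0 _ | L_le0] := boolP (0 < L); last by rewrite /pool (negbTE L_le0).
split=> [w|].
  rewrite -(pmulr_rge0 _ L_gt0) pool_mean sumr_ge0 // => i _.
  by rewrite mulr_ge0 //; case: (nu_dist i).
apply: (mulfI (lt0r_neq0 L_gt0)); rewrite mulr1 big_distrr /=.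
under eq_bigr do rewrite pool_mean.
rewrite exchange_big /=; apply: eq_bigr => i _.
by rewrite -big_distrr /=; case: (nu_dist i) => _ ->; rewrite mulr1.
Qed.

Lemma entropy_pool : \sum_(i | P i) lam i * entropy (nu i) <= L * entropy pool.
Proof.
have [L_gt0 | /pool_weight_eq0 lam0] := boolP (0 < L); last first.
  by rewrite !big1 ?mul0r // => i /lam0 ->; rewrite mul0r.
have ln2_gt0 : 0 < ln (2 : R) by rewrite ln_gt0 // ltr1n.
have -> : \sum_(i | P i) lam i * entropy (nu i) =
    - ((\sum_s \sum_(i | P i) lam i * (nu i s * ln (nu i s))) / ln 2).
  rewrite exchange_big /= big_distrl /= -sumrN; apply: eq_bigr => i _.
  by rewrite entropyE mulrN mulrA big_distrr.
rewrite entropyE mulrN lerN2 mulrA big_distrr /= ler_pM2r ?invr_gt0 //.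
apply: ler_sum => s _; apply: jensen_xlnx => //; last exact: pool_mean.
by move=> i; case: (nu_dist i).
Qed.

Section SharedBestResponse.
Variables (A : finType) (uS uR : Omega -> A -> R) (a : A).
Hypothesis a_best : forall i, P i -> Astar uR (nu i) a.

Lemma Astar_pool : 0 < L -> Astar uR pool a.
Proof.
move=> L_gt0 b; rewrite -(ler_pM2l L_gt0) !expected_pool.
by apply: ler_sum => i Pi; apply: ler_wpM2l => //; apply: a_best.
Qed.

Lemma Astar_pool_component b i :
  Astar uR pool b -> P i -> 0 < lam i -> Astar uR (nu i) b.
Proof.
move=> b_best Pi lam_gt0 c.
have gap_ge0 k : P k -> 0 <= lam k * (expected uR (nu k) a - expected uR (nu k) b).
  by move=> Pk; rewrite mulr_ge0 // subr_ge0; apply: a_best.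
have gap0 : \sum_(k | P k) lam k * (expected uR (nu k) a - expected uR (nu k) b) = 0.
  apply/le_anti; rewrite sumr_ge0 // andbT.
  under eq_bigr do rewrite mulrBr.
  by rewrite sumrB -!expected_pool subr_le0 ler_wpM2l ?sumr_ge0.
move/eqP: (psumr_eq0P gap_ge0 gap0 Pi).
by rewrite mulf_eq0 gt_eqF //= subr_eq0 => /eqP <-; apply: a_best.
Qed.

Lemma uS_star_pool :
  \sum_(i | P i) lam i * uS_star uS uR (nu i) <= L * uS_star uS uR pool.
Proof.
have [L_gt0 | /pool_weight_eq0 lam0] := boolP (0 < L); last first.
  by rewrite !big1 ?mul0r // => i /lam0 ->; rewrite mul0r.
rewrite -ler_pdivrMl //; apply: le_uS_star; first by exists a; apply: Astar_pool.
move=> b b_best; rewrite ler_pdivrMl // expected_pool.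
apply: ler_sum => i Pi; have [lam_gt0 | lam_le0] := ltP 0 (lam i); last first.
  have -> : lam i = 0 by apply/le_anti; rewrite lam_le0 lam_ge0.
  by rewrite !mul0r.
by rewrite ler_pM2l //; apply/uS_star_le_expected/(Astar_pool_component b_best).
Qed.

End SharedBestResponse.

End Pool.

Section Splittings.
Variables (R : realType) (Omega A : finType) (uS uR : Omega -> A -> R).
Variables (mu : {ffun Omega -> R}) (c : R).

Definition payoff n (lam : 'I_n -> R) (nu : 'I_n -> {ffun Omega -> R}) : R :=
  \sum_i lam i * uS_star uS uR (nu i).

Section Coarsening.
Variables (n p : nat) (lam : 'I_n -> R) (nu : 'I_n -> {ffun Omega -> R}).
Variable g : 'I_n -> 'I_p.

Definition coarse_weight (k : 'I_p) : R := \sum_(i | g i == k) lam i.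

Definition coarse_posterior (k : 'I_p) : {ffun Omega -> R} :=
  pool lam nu mu (fun i => g i == k).

Lemma sum_coarse (F : 'I_n -> R) : \sum_i F i = \sum_k \sum_(i | g i == k) F i.
Proof. exact: partition_big. Qed.

Hypotheses (mu_dist : is_dist mu) (feas : feasible mu c lam nu).

Lemma feasible_coarse : feasible mu c coarse_weight coarse_posterior.
Proof.
have [lam_ge0 lam_sum1 nu_dist nu_mean nu_entropy] := feas.
split.
- by move=> k; rewrite sumr_ge0.
- by rewrite -sum_coarse.
- by move=> k; apply: pool_dist.
- by move=> w; rewrite -nu_mean sum_coarse; apply: eq_bigr => k _; rewrite pool_mean.
- rewrite (le_trans nu_entropy) // sum_coarse; apply: ler_sum => k _.
  exact: entropy_pool.
Qed.

Variable act : 'I_p -> A.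
Hypothesis act_best : forall i, Astar uR (nu i) (act (g i)).

Lemma payoff_coarse : payoff lam nu <= payoff coarse_weight coarse_posterior.
Proof.
have [lam_ge0 _ _ _ _] := feas.
rewrite /payoff sum_coarse; apply: ler_sum => k _.
by apply: (uS_star_pool mu lam_ge0 uS (a := act k)) => // i /eqP <-; apply: act_best.
Qed.

End Coarsening.

Lemma reduce_to_actions (a0 : A) n (lam : 'I_n -> R) nu :
  is_dist mu -> feasible mu c lam nu ->
  exists (lam' : 'I_#|A| -> R) nu',
    feasible mu c lam' nu' /\ payoff lam nu <= payoff lam' nu'.
Proof.
move=> mu_dist feas; pose g i := enum_rank [arg max_(a > a0) expected uR (nu i) a]%O.
exists (coarse_weight lam g), (coarse_posterior lam nu g).
split; first exact: feasible_coarse.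
apply: (payoff_coarse feas (act := enum_val)) => i.
by rewrite /g enum_rankK; apply: Astar_arg_max.
Qed.

Lemma reduce_to_dimension n (lam : 'I_n -> R) nu : feasible mu c lam nu ->
  exists m (lam' : 'I_m -> R) nu', [/\ (m <= minn n #|Omega|.+1)%N,
    feasible mu c lam' nu' & payoff lam nu <= payoff lam' nu'].
Proof.
case=> lam_ge0 lam_sum1 nu_dist nu_mean nu_entropy.
(* [x i] is the point (nu i, H (nu i)) and [cw] measures its total mass. *)
pose x i (o : option Omega) := if o is Some w then nu i w else entropy (nu i).
pose cw (o : option Omega) : R := if o is Some _ then 1 else 0.
have on_hyp i : \sum_o cw o * x i o = 1.
  rewrite sum_option mul0r add0r -(proj2 (nu_dist i)).
  by apply: eq_bigr => w _; apply: mul1r.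
have [m [g [lam' [le_m lam'_ge0 lam'x lam'u]]]] :=
  caratheodory (fun i => uS_star uS uR (nu i)) on_hyp lam_ge0.
exists m, lam', (fun k => nu (g k)); split => //; first by rewrite card_option in le_m.
split => //.
- rewrite (sum_on_hyperplane _ (fun k => on_hyp (g k))).
  by under eq_bigr do rewrite lam'x; rewrite -sum_on_hyperplane.
- by move=> w; rewrite -nu_mean; apply: (lam'x (Some w)).
- by rewrite (le_trans nu_entropy) // (lam'x None).
Qed.

End Splittings.

Theorem corollary3 (R : realType) (Omega A : finType)
  (uS uR : Omega -> A -> R) (hA : (0 < #|A|)%N)
  (mu : {ffun Omega -> R}) (c : R) (hmu : is_dist mu) (hc : 0 <= c) :
  sup (values uS uR mu c (fun n => (n <= minn #|A| #|Omega|.+1)%N)) = V uS uR mu c.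
Proof.
have /card_gt0P[a0 _] := hA.
apply: sup_eq_dominated => _ [n [lam [nu [_ feas ->]]]]; first by exists n, lam, nu.
have [lam1 [nu1 [feas1 le_payoff1]]] := reduce_to_actions uS uR a0 hmu feas.
have [m [lam2 [nu2 [le_m feas2 le_payoff2]]]] := reduce_to_dimension uS uR feas1.
apply/downP; exists (payoff uS uR lam2 nu2); last exact: le_trans le_payoff2.
by exists m, lam2, nu2.
Qed.
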